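(* If $S\subseteq\mathbb N^d$ is a PI-monoid, then there exist a unique submonoid $T$ of $\mathbb N^d$ and a unique $\mathbf a\in T\setminus\{0\}$ such that $S=(\mathbf a+T)\cup\{0\}$.
   Context: A submonoid $S$ of $\mathbb N^d$ is a PI-monoid if there exist a submonoid $T$ of $\mathbb N^d$ and $\mathbf a\in T\setminus\{0\}$ with $S=(\mathbf a+T)\cup\{0\}$. *)

(* Points of N^d are finite functions 'I_d -> nat;
   subsets of N^d are predicates (possibly infinite). *)
From mathcomp Require Import all_boot.
Set Implicit Arguments. Unset Strict Implicit. Unset Printing Implicit Defensive.

Definition vec (d : nat) := {ffun 'I_d -> nat}.

Definition vzero (d : nat) : vec d := [ffun _ => 0].
Definition vadd (d : nat) (x y : vec d) : vec d := [ffun i => x i + y i].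

Definition submonoid (d : nat) (S : vec d -> Prop) : Prop :=
  S (vzero d) /\ forall x y, S x -> S y -> S (vadd x y).

Definition shifted_union (d : nat) (S T : vec d -> Prop) (a : vec d) : Prop :=
  forall x, S x <-> (x = vzero d \/ exists t, T t /\ x = vadd a t).

Definition PI_monoid (d : nat) (S : vec d -> Prop) : Prop :=
  submonoid S /\
  exists (T : vec d -> Prop) (a : vec d),
    submonoid T /\ T a /\ a <> vzero d /\ shifted_union S T a.

From mathcomp Require Import all_boot.
Set Implicit Arguments. Unset Strict Implicit. Unset Printing Implicit Defensive.

(* Uniqueness: a nonzero shift [a] is the componentwise minimum of the nonzero
   elements of [S], and once [a] is fixed, [T] is recovered as [S - a] because
   translation by [a] is injective and never hits [0]. *)

Section Translation.

Variables (d : nat) (a : vec d).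

Lemma vaddv0 : vadd a (vzero d) = a.
Proof. by apply/ffunP => i; rewrite !ffunE addn0. Qed.

Lemma vaddI : injective (vadd a).
Proof.
move=> x y /ffunP eq_axy; apply/ffunP => i.
by have := eq_axy i; rewrite !ffunE => /addnI.
Qed.

Lemma vadd_neq0 (x : vec d) : a <> vzero d -> vadd a x <> vzero d.
Proof.
move=> a_neq0 /ffunP axy0; apply: a_neq0; apply/ffunP => i.
by have := axy0 i; rewrite !ffunE => /eqP; rewrite addn_eq0 => /andP[/eqP-> _].
Qed.

End Translation.

Section ShiftedUnion.

Variables (d : nat) (S T : vec d -> Prop) (a : vec d).
Hypotheses (a_neq0 : a <> vzero d) (SE : shifted_union S T a).

Lemma shifted_union_shift_mem : T (vzero d) -> S a.
Proof. by move=> T0; apply/SE; right; exists (vzero d); rewrite vaddv0. Qed.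

Lemma shifted_union_shift_le (x : vec d) :
  S x -> x <> vzero d -> forall i, a i <= x i.
Proof. by move=> /SE[-> //|[t [_ ->]]] _ i; rewrite ffunE leq_addr. Qed.

Lemma shifted_union_memE (x : vec d) : T x <-> S (vadd a x).
Proof.
split=> [Tx|/SE[/(vadd_neq0 a_neq0) //|[t [Tt /vaddI->]]] //].
by apply/SE; right; exists x.
Qed.

End ShiftedUnion.

Lemma shifted_union_shift_unique d (S T T' : vec d -> Prop) (a a' : vec d) :
  T (vzero d) -> T' (vzero d) -> a <> vzero d -> a' <> vzero d ->
  shifted_union S T a -> shifted_union S T' a' -> a' = a.
Proof.
move=> T0 T'0 a_neq0 a'_neq0 SE SE'.
have Sa := shifted_union_shift_mem SE T0.
have Sa' := shifted_union_shift_mem SE' T'0.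
apply/ffunP => i; apply/eqP; rewrite eqn_leq.
by rewrite (shifted_union_shift_le SE' Sa a_neq0) (shifted_union_shift_le SE Sa' a'_neq0).
Qed.

Theorem corollary5p6 (d : nat) (S : vec d -> Prop) :
  PI_monoid S ->
  exists (T : vec d -> Prop) (a : vec d),
    (submonoid T /\ T a /\ a <> vzero d /\ shifted_union S T a) /\
    forall (T' : vec d -> Prop) (a' : vec d),
      submonoid T' -> T' a' -> a' <> vzero d -> shifted_union S T' a' ->
      (forall x, T' x <-> T x) /\ a' = a.
Proof.
move=> [_ [T [a [monT [Ta [a_neq0 SE]]]]]].
exists T, a; split=> // T' a' [T'0 _] _ a'_neq0 SE'.
have [T0 _] := monT.
have a'E := shifted_union_shift_unique T0 T'0 a_neq0 a'_neq0 SE SE'.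
subst a'; split=> // x.
exact: iff_trans (shifted_union_memE a_neq0 SE' x) (iff_sym (shifted_union_memE a_neq0 SE x)).
Qed.
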